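(* If $m\ge 1$, $t\ge 1$ and $n=m(2^t-1)$, then \[s\text{-}sat(Q_n,Q_m)\le\Big(\frac{m^2}{2}+\frac{m}{2}\Big)2^n.\]
   Context: $Q_n$ is the hypercube on $\{0,1\}^n$ with edges between vertices differing in exactly one coordinate. A copy of $F$ is a subgraph isomorphic to $F$. A graph $G$ is $(Q_n,F)$-semi-saturated if $G\subseteq Q_n$ and adding any edge of $E(Q_n)\setminus E(G)$ increases the number of copies of $F$. $s\text{-}sat(Q_n,F)$ is the minimum number of edges of such a graph. *)

From mathcomp Require Import all_boot.
Set Implicit Arguments. Unset Strict Implicit. Unset Printing Implicit Defensive.

Definition vtx (n : nat) := {ffun 'I_n -> bool}.

Definition hdist (n : nat) (x y : vtx n) : nat := #|[set i | x i != y i]|.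

Definition qedges (n : nat) : {set {set vtx n}} :=
  [set e | [exists x, exists y, (e == [set x; y]) && (hdist x y == 1)]].

(* A graph G ⊆ Q_n on vertex set {0,1}^n is given by its edge set E. *)
Definition is_copy (n m : nat) (E : {set {set vtx n}})
    (p : {set vtx n} * {set {set vtx n}}) : bool :=
  let: (W, F) := p in
  [&& F \subset E,
      [forall f in F, f \subset W] &
      [exists phi : {ffun vtx m -> vtx n},
         [&& injectiveb phi, (phi @: setT) == W &
             [forall a, forall b,
               ([set a; b] \in qedges m) == ([set phi a; phi b] \in F)]]]].

Definition ncopies (n m : nat) (E : {set {set vtx n}}) : nat :=
  #|[set p | is_copy m E p]|.

Definition semisat (n m : nat) (E : {set {set vtx n}}) : bool :=
  (E \subset qedges n) &&
  [forall e in qedges n :\: E, ncopies m E < ncopies m (e |: E)].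

Lemma semisat_exists (n m : nat) :
  exists k, [exists E : {set {set vtx n}}, semisat m E && (#|E| == k)].
Proof.
exists #|qedges n|; apply/existsP; exists (qedges n).
rewrite /semisat subxx eqxx /=; apply/andP; split=> //.
by apply/forall_inP=> e; rewrite setDv inE.
Qed.

Definition ssat (n m : nat) : nat := ex_minn (semisat_exists n m).

(* Write n = m k with k = 2^t - 1, split the coordinates into m blocks of k
   and label the coordinates of each block 1, ..., k.  The syndrome of a vertex
   in block l is the xor of the labels of its set coordinates there; its zero
   set C_l is a perfect (Hamming) code, of density 1/2^t.  Let G consist of the
   edges meeting some C_l.  A codeword of C_l owns its k edges inside block l
   and shares each of its other edges with another codeword, whence
   2 |G| <= m k (m+1) 2^n / (k+1) <= m (m+1) 2^n.  G is semi-saturated: if xy is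
   a missing edge, in direction p, then no syndrome of x vanishes; flipping, in
   each block l other than that of p, the coordinate labelled by the syndrome
   of x lands in C_l, and these m - 1 directions together with p span a copy of
   Q_m through xy all of whose other edges meet some C_l. *)

From Stdlib Require PeanoNat.
From HB Require Import structures.
From mathcomp Require Import all_boot zify.
Set Implicit Arguments. Unset Strict Implicit. Unset Printing Implicit Defensive.

Definition xorn := Nat.lxor.

Lemma xornA : associative xorn.
Proof. by move=> a b c; rewrite /xorn PeanoNat.Nat.lxor_assoc. Qed.
Lemma xornC : commutative xorn. Proof. exact: PeanoNat.Nat.lxor_comm. Qed.
Lemma xor0n : left_id 0 xorn. Proof. exact: PeanoNat.Nat.lxor_0_l. Qed.
Lemma xornn a : xorn a a = 0. Proof. exact: PeanoNat.Nat.lxor_nilpotent. Qed.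

HB.instance Definition _ := Monoid.isComLaw.Build nat 0 xorn xornA xornC xor0n.

Lemma ltn_pow2_shiftr t a : (a < 2 ^ t) = (Nat.shiftr a t == 0).
Proof.
have -> : 2 ^ t = Nat.pow 2 t by elim: t => // t IH; rewrite expnS IH.
rewrite PeanoNat.Nat.shiftr_div_pow2.
have pow_neq0 := PeanoNat.Nat.pow_nonzero 2 t (PeanoNat.Nat.neq_succ_0 1).
have [small_div _] := PeanoNat.Nat.div_small_iff a _ pow_neq0.
apply/idP/eqP => [/ltP|/small_div/ltP //]; exact: PeanoNat.Nat.div_small.
Qed.

Lemma xorn_lt_pow2 t a b : a < 2 ^ t -> b < 2 ^ t -> xorn a b < 2 ^ t.
Proof.
by rewrite !ltn_pow2_shiftr /xorn PeanoNat.Nat.shiftr_lxor => /eqP -> /eqP ->.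
Qed.

Lemma leq_card_bigcup (I T : finType) (F : I -> {set T}) :
  #|\bigcup_i F i| <= \sum_i #|F i|.
Proof.
apply: (big_ind2 (fun (A : {set T}) n => #|A| <= n)) => [|A a B b hA hB|//].
  by rewrite cards0.
exact: leq_trans (leq_card_setU A B) (leq_add hA hB).
Qed.

Lemma sum_card_fibres_le (T : finType) n (f : T -> nat) :
  \sum_(v < n) #|[set y | f y == v]| <= #|T|.
Proof.
have disj (i j : 'I_n) : i != j -> [disjoint [set y | f y == i] & [set y | f y == j]].
  move=> ij; rewrite -setI_eq0; apply/eqP/setP => y; rewrite !inE.
  apply/negbTE; apply: contra ij => /andP [/eqP fi /eqP fj].
  by apply/eqP/ord_inj; rewrite -fi -fj.
apply: leq_trans (max_card (\bigcup_(v < n) [set y | f y == v])).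
rewrite -sum1_card (partition_disjoint_bigcup _ _ disj).
by apply: eq_leq; apply: eq_bigr => v _; rewrite sum1_card.
Qed.

Definition flip n (x : vtx n) (q : 'I_n) : vtx n := [ffun r => x r (+) (r == q)].
Arguments flip {n}.

Lemma flipK n (q : 'I_n) : involutive (flip ^~ q).
Proof. by move=> x; apply/ffunP => r; rewrite !ffunE addbK. Qed.

Lemma flip_inj n (q : 'I_n) : injective (flip ^~ q).
Proof. exact: inv_inj (@flipK n q). Qed.

Lemma flip_at n (x : vtx n) q : flip x q q = ~~ x q.
Proof. by rewrite ffunE eqxx addbT. Qed.

Lemma flip_other n (x : vtx n) q r : r != q -> flip x q r = x r.
Proof. by rewrite ffunE => /negbTE ->; rewrite addbF. Qed.

Lemma hdist_flip n (x : vtx n) q : hdist x (flip x q) = 1.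
Proof.
rewrite /hdist (_ : [set i | x i != flip x q i] = [set q]) ?cards1 //.
by apply/setP => i; rewrite !inE ffunE; case: (i == q); case: (x i).
Qed.

Lemma qedge_flip n (x : vtx n) q : [set x; flip x q] \in qedges n.
Proof.
by rewrite inE; apply/existsP; exists x; apply/existsP; exists (flip x q);
  rewrite eqxx hdist_flip.
Qed.

Lemma qedgeP n (e : {set vtx n}) :
  e \in qedges n -> exists x q, e = [set x; flip x q].
Proof.
rewrite inE => /existsP [x /existsP [y /andP [/eqP -> /cards1P [q dxy]]]].
exists x, q; congr [set x; _]; apply/ffunP => i.
have : (x i != y i) = (i == q) by move/setP/(_ i): dxy; rewrite !inE.
by rewrite ffunE; case: (x i); case: (y i) => <-.
Qed.

Lemma qedge_memP n (e : {set vtx n}) z :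
  e \in qedges n -> z \in e -> exists q, e = [set z; flip z q].
Proof.
move=> /qedgeP [x [q ->]] /set2P [] ->; exists q => //.
by rewrite flipK setUC.
Qed.

Lemma card_le_flip n (A B : {set vtx n}) q :
  {in A, forall x, flip x q \in B} -> #|A| <= #|B|.
Proof.
move=> AB; rewrite -(card_imset _ (@flip_inj n q)); apply: subset_leq_card.
by apply/subsetP => _ /imsetP [x Ax ->]; exact: AB.
Qed.

Lemma is_copyS n m (E E' : {set {set vtx n}}) w :
  E \subset E' -> is_copy m E w -> is_copy m E' w.
Proof.
case: w => W F sEE' /and3P [sFE FW iso]; apply/and3P; split => //.
exact: subset_trans sEE'.
Qed.

Lemma ncopies_lt n m (E E' : {set {set vtx n}}) w :
  E \subset E' -> is_copy m E' w -> ~~ is_copy m E w ->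
  ncopies m E < ncopies m E'.
Proof.
move=> sEE' cE' ncE; apply: proper_card; apply/properP; split.
  by apply/subsetP => v; rewrite !inE; exact: is_copyS.
by exists w; rewrite inE.
Qed.

Lemma is_copy_image n m (E : {set {set vtx n}}) (phi : {ffun vtx m -> vtx n}) :
  injective phi -> [set phi @: e | e : {set vtx m} in qedges m] \subset E ->
  is_copy m E (phi @: setT, [set phi @: e | e : {set vtx m} in qedges m]).
Proof.
move=> phi_inj sFE; apply/and3P; split => //.
  by apply/forall_inP => _ /imsetP [e _ ->]; exact: imsetS (subsetT e).
apply/existsP; exists phi; rewrite eqxx (introT (injectiveP _) phi_inj) /=.
apply/forallP => a; apply/forallP => b.
have -> : [set phi a; phi b] = phi @: [set a; b] by rewrite imsetU1 imset_set1.
by rewrite (mem_imset _ _ (imset_inj phi_inj)).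
Qed.

Lemma ssat_le n m (E : {set {set vtx n}}) : semisat m E -> ssat n m <= #|E|.
Proof.
move=> satE; rewrite /ssat; case: ex_minnP => s _; apply.
by apply/existsP; exists E; rewrite satE eqxx.
Qed.

Section Construction.

Variables m k : nat.
Hypothesis k_gt0 : 0 < k.

Local Notation N := (m * k).
Local Notation V := (vtx (m * k)).

Lemma block_subproof (q : 'I_N) : q %/ k < m.
Proof. by rewrite ltn_divLR. Qed.

Definition block (q : 'I_N) : 'I_m := Ordinal (block_subproof q).

Definition label (q : 'I_N) : nat := (q %% k).+1.

Lemma pos_subproof (l : 'I_m) v : l * k + v.-1 %% k < N.
Proof.
have := ltn_pmod v.-1 k_gt0.
have : l.+1 * k <= m * k by rewrite leq_mul2r ltn_ord orbT.
by rewrite mulSn; lia.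
Qed.

Definition pos (l : 'I_m) v : 'I_N := Ordinal (pos_subproof l v).

Lemma block_pos l v : block (pos l v) = l.
Proof. by apply: val_inj; rewrite /= divnMDl // divn_small ?addn0 ?ltn_pmod. Qed.

Lemma label_pos l v : 0 < v <= k -> label (pos l v) = v.
Proof.
by move=> /andP [v_gt0 v_le]; rewrite /label /= modnMDl modn_mod modn_small; lia.
Qed.

Definition syndrome (l : 'I_m) (y : V) : nat :=
  \big[xorn/0]_(q | block q == l) (if y q then label q else 0).

Lemma eq_syndrome l (y z : V) :
  (forall q, block q = l -> y q = z q) -> syndrome l y = syndrome l z.
Proof. by move=> yz; apply: eq_bigr => q /eqP /yz ->. Qed.

Lemma syndrome_flip l y q :
  syndrome l (flip y q) = if block q == l then xorn (syndrome l y) (label q)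
                          else syndrome l y.
Proof.
case: ifP => [ql|/negbT ql]; last first.
  apply: eq_syndrome => r rl; rewrite flip_other //.
  by apply: contraNneq ql => <-; rewrite rl.
rewrite /syndrome !(bigD1 q ql) /= flip_at.
rewrite (eq_bigr (fun r => if y r then label r else 0)); last first.
  by move=> r /andP [_ rq]; rewrite flip_other.
by case: (y q); rewrite /= ?xor0n xornC // xornA xornn xor0n.
Qed.

Lemma syndrome_le t l y : k.+1 = 2 ^ t -> syndrome l y <= k.
Proof.
move=> kt; rewrite -ltnS kt.
apply: (big_ind (fun s => s < 2 ^ t)) => [|a b|q _]; first by rewrite expn_gt0.
  exact: xorn_lt_pow2.
by case: (y q); rewrite //= -kt ltnS ?ltn_pmod.
Qed.

Definition code l : {set V} := [set y | syndrome l y == 0].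

Lemma card_code l : #|code l| * k.+1 <= 2 ^ N.
Proof.
have le_fibre (v : 'I_k.+1) : #|code l| <= #|[set y | syndrome l y == v]|.
  case: v => [[|v] v_lt]; first by [].
  apply: (@card_le_flip _ _ _ (pos l v.+1)) => y; rewrite !inE => /eqP y0.
  by rewrite syndrome_flip block_pos eqxx y0 xor0n label_pos.
apply: leq_trans (_ : \sum_(v < k.+1) #|[set y | syndrome l y == v]| <= _).
  by rewrite mulnC -{1}[k.+1]card_ord -sum_nat_const; apply: leq_sum => v _.
apply: leq_trans (sum_card_fibres_le _ (syndrome l)) _.
by rewrite card_ffun card_bool card_ord.
Qed.

Lemma card_code_off_block l q :
  block q != l -> 2 * #|[set y in code l | ~~ y q]| = #|code l|.
Proof.
move=> ql; rewrite -(cardsID [set y : V | y q] (code l)) mul2n -addnn addnC.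
have -> : code l :\: [set y : V | y q] = [set y in code l | ~~ y q].
  by apply/setP => y; rewrite !inE andbC.
congr (_ + _); apply/eqP; rewrite eqn_leq.
by apply/andP; split; apply: (@card_le_flip _ _ _ q) => y;
  rewrite !inE syndrome_flip (negbTE ql) flip_at ?negbK => /andP [-> ->].
Qed.

Definition code_edges l : {set {set V}} :=
  [set e in qedges N | [exists z in e, z \in code l]].

Definition code_graph : {set {set V}} := \bigcup_l code_edges l.

Definition code_from l q : {set V} :=
  [set y : V in code l | (block q == l) || ~~ y q].

Lemma card_code_edges l : #|code_edges l| <= \sum_q #|code_from l q|.
Proof.
apply: (@leq_trans #|\bigcup_q [set [set y; flip y q] | y in code_from l q]|).
  apply: subset_leq_card; apply/subsetP => e.
  rewrite inE => /andP [eQ /existsP [z /andP [ze zl]]].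
  have [q ->] := qedge_memP eQ ze; apply/bigcupP; exists q => //.
  case: (boolP ((block q == l) || ~~ z q)) => [zq | ].
    by apply/imsetP; exists z; rewrite // inE zl.
  rewrite negb_or negbK => /andP [ql zq].
  apply/imsetP; exists (flip z q); last by rewrite flipK setUC.
  by move: zl; rewrite !inE syndrome_flip (negbTE ql) flip_at zq orbT andbT.
apply: leq_trans (leq_card_bigcup _) _.
by apply: leq_sum => q _; exact: leq_imset_card.
Qed.

Lemma card_code_from l q :
  2 * k.+1 * #|code_from l q| <= (block q == l).+1 * 2 ^ N.
Proof.
have := card_code l; case: eqP => [ql | /eqP ql] /=.
  have -> : code_from l q = code l by apply/setP => y; rewrite !inE ql eqxx andbT.
  by rewrite -mulnA leq_pmul2l // mulnC.
have -> : code_from l q = [set y in code l | ~~ y q].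
  by apply/setP => y; rewrite !inE (negbTE ql).
by rewrite mul1n mulnAC (card_code_off_block ql).
Qed.

Lemma card_code_graph : 2 * #|code_graph| <= m * m.+1 * 2 ^ N.
Proof.
rewrite -(leq_pmul2l (ltn0Sn k)) mulnCA mulnA.
apply: (@leq_trans (2 * k.+1 * \sum_l \sum_q #|code_from l q|)).
  rewrite leq_mul2l; apply/orP; right.
  apply: leq_trans (leq_card_bigcup _) _.
  by apply: leq_sum => l _; exact: card_code_edges.
apply: (@leq_trans (\sum_l \sum_q (block q == l).+1 * 2 ^ N)).
  rewrite big_distrr; apply: leq_sum => l _.
  by rewrite big_distrr; apply: leq_sum => q _; exact: card_code_from.
have block_weight q : \sum_l (block q == l).+1 = m.+1.
  under eq_bigr do rewrite -add1n.
  rewrite big_split /= sum1_card card_ord (bigD1 (block q)) //= eqxx big1 ?addn1 //.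
  by move=> l; rewrite eq_sym => /negbTE ->.
rewrite exchange_big /=; under eq_bigr do rewrite -big_distrl block_weight /=.
by rewrite sum_nat_const card_ord; nia.
Qed.

Section Copy.

Variables (x : V) (p : 'I_N).

Definition dir (i : 'I_m) : 'I_N :=
  if i == block p then p else pos i (syndrome i x).

(* Coordinate r moves iff r = dir i for some i with a i set; then i = block r. *)
Definition embed : {ffun vtx m -> V} :=
  [ffun a : vtx m => [ffun r => x r (+) (a (block r) && (dir (block r) == r))]].

Lemma block_dir i : block (dir i) = i.
Proof. by rewrite /dir; case: eqP => [-> | _]; rewrite ?block_pos. Qed.

Lemma eq_dir r i : (block r == i) && (dir (block r) == r) = (r == dir i).
Proof.
apply/andP/eqP => [[/eqP <- /eqP //] | ->].
by rewrite block_dir.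
Qed.

Lemma embed_dir a i : embed a (dir i) = x (dir i) (+) a i.
Proof. by rewrite !ffunE block_dir eqxx andbT. Qed.

Lemma embed_inj : injective embed.
Proof.
move=> a b eab; apply/ffunP => i.
by apply: (@addbI (x (dir i))); rewrite -!embed_dir eab.
Qed.

Lemma embed_flip a i : embed (flip a i) = flip (embed a) (dir i).
Proof.
apply/ffunP => r; rewrite !ffunE -eq_dir -addbA; congr (_ (+) _).
by case: (block r == i); case: (a (block r)); case: (dir (block r) == r).
Qed.

Lemma embed0 : embed [ffun => false] = x.
Proof. by apply/ffunP => r; rewrite !ffunE addbF. Qed.

Lemma embed_on_block (a : vtx m) :
  (forall l, l != block p -> ~~ a l) ->
  embed a = if a (block p) then flip x p else x.
Proof.
move=> a_off; apply/ffunP => r; rewrite !ffunE.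
case: (eqVneq (block r) (block p)) => [rp | rp].
  by rewrite rp /dir eqxx eq_sym; case: (a (block p)); rewrite ?ffunE ?addbF.
rewrite (negbTE (a_off _ rp)) addbF; case: (a (block p)) => //.
by rewrite flip_other //; apply: contraNneq rp => ->.
Qed.

Hypothesis x_syndrome : forall l, 0 < syndrome l x <= k.

Lemma embed_code (a : vtx m) l : l != block p -> a l -> embed a \in code l.
Proof.
move=> lp al; rewrite inE (@eq_syndrome _ _ (flip x (dir l))).
  by rewrite syndrome_flip block_dir eqxx /dir (negbTE lp) label_pos // xornn.
move=> r rl; rewrite !ffunE rl al /= eq_sym.
by congr (_ (+) _); apply/eqP/eqP => [-> | <-]; rewrite ?block_dir // -rl.
Qed.

Lemma embed_edge_code (a : vtx m) i l :
  l != block p -> a l -> [set embed a; flip (embed a) (dir i)] \in code_graph.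
Proof.
move=> lp al; apply/bigcupP; exists l => //; rewrite inE qedge_flip.
by apply/existsP; exists (embed a); rewrite set21 embed_code.
Qed.

Lemma embed_edge (a : vtx m) i :
  [set embed a; embed (flip a i)] \in [set x; flip x p] |: code_graph.
Proof.
rewrite embed_flip in_setU1.
case: (boolP [exists l, (l != block p) && a l]) =>
  [/existsP [l /andP [lp al]] | /existsPn a_off].
  by rewrite (embed_edge_code i lp al) orbT.
case: (boolP [exists l, (l != block p) && flip a i l]) =>
  [/existsP [l /andP [lp al]] | /existsPn fa_off].
  have -> : [set embed a; flip (embed a) (dir i)] =
            [set embed (flip a i); flip (embed (flip a i)) (dir i)].
    by rewrite embed_flip flipK setUC.
  by rewrite (embed_edge_code i lp al) orbT.
have ip : i = block p.
  apply/eqP; apply: contraTT (a_off i) => ip.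
  by move: (fa_off i); rewrite ip flip_at !andTb negbK.
have {}a_off l : l != block p -> ~~ a l by move=> lp; move: (a_off l); rewrite lp.
rewrite ip /dir eqxx (embed_on_block a_off).
by case: (a (block p)); rewrite ?flipK 1?setUC eqxx.
Qed.

End Copy.

Lemma code_graph_semisat t : k.+1 = 2 ^ t -> semisat m code_graph.
Proof.
move=> kt; apply/andP; split.
  by apply/bigcupsP => l _; apply/subsetP => e; rewrite inE => /andP [].
apply/forall_inP => e; rewrite inE => /andP [eG eQ].
have [x [p exp]] := qedgeP eQ; rewrite exp in eG *.
have x_syndrome l : 0 < syndrome l x <= k.
  rewrite (syndrome_le _ _ kt) andbT lt0n; apply: contraNneq eG => x0.
  apply/bigcupP; exists l => //; rewrite inE qedge_flip.
  by apply/existsP; exists x; rewrite set21 inE x0.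
pose F := [set embed x p @: e | e : {set vtx m} in qedges m].
apply: (@ncopies_lt _ _ _ _ (embed x p @: setT, F)); first exact: subsetU1.
  apply: is_copy_image; first exact: embed_inj.
  apply/subsetP => _ /imsetP [_ /qedgeP [a [i ->]] ->].
  by rewrite imsetU1 imset_set1; exact: embed_edge.
apply: contra eG => /and3P [/subsetP sFG _ _]; apply: sFG.
apply/imsetP; exists [set [ffun => false]; flip [ffun => false] (block p)].
  exact: qedge_flip.
by rewrite imsetU1 imset_set1 embed_flip embed0 /dir eqxx.
Qed.

End Construction.

Theorem mainTheorem7 (m t n : nat) :
  1 <= m -> 1 <= t -> n = m * (2 ^ t - 1) ->
  2 * ssat n m <= (m ^ 2 + m) * 2 ^ n.
Proof.
move=> _ t_gt0 ->; set k := 2 ^ t - 1.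
have kt : k.+1 = 2 ^ t by rewrite /k subn1 prednK ?expn_gt0.
have k_gt0 : 0 < k by rewrite -ltnS kt -(expn0 2) ltn_exp2l.
rewrite (_ : m ^ 2 + m = m * m.+1); last by rewrite mulnS addnC.
apply: leq_trans _ (card_code_graph m k_gt0); rewrite leq_mul2l /=.
exact: ssat_le (code_graph_semisat m k_gt0 kt).
Qed.
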